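(* Let $r\ge1$ and let $\mathcal{P}$ be any partition of $[r]^2=\{1,\dots,r\}\times\{1,\dots,r\}$. Then the set of subgroups $\{G\subseteq\mathfrak{S}_r: [r]^2/G\text{ refines }\mathcal{P}\}$ forms a lattice under subgroup inclusion.
   Context: $\mathfrak{S}_r$ acts on $[r]^2$ diagonally, $\sigma(i,j)=(\sigma(i),\sigma(j))$, and $[r]^2/G$ denotes the partition of $[r]^2$ into $G$-orbits. A partition $Q$ refines $\mathcal{P}$ if every block of $Q$ is contained in some block of $\mathcal{P}$. *)

From mathcomp Require Import all_boot all_order all_fingroup.
Set Implicit Arguments. Unset Strict Implicit. Unset Printing Implicit Defensive.

Definition diag_orbit (r : nat) (G : {set {perm 'I_r}}) (x : 'I_r * 'I_r)
  : {set 'I_r * 'I_r} :=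
  [set ((s : {perm 'I_r}) x.1, s x.2) | s in G].

Definition diag_orbits (r : nat) (G : {set {perm 'I_r}})
  : {set {set 'I_r * 'I_r}} :=
  [set diag_orbit G x | x in [set: 'I_r * 'I_r]].

Definition refines (T : finType) (Q P : {set {set T}}) : Prop :=
  forall B, B \in Q -> exists2 C, C \in P & B \subset C.

From mathcomp Require Import all_boot all_order all_fingroup.

(* [r]^2/G refines P exactly when every element of G keeps each point of
   [r]^2 in its own P-block. Such permutations form a subgroup S_P of S_r, so
   the admissible subgroups are precisely the subgroups of S_P; these are
   closed under intersection and under the generated join <<G :|: H>>, which
   are then the meet and the join. *)

Section DiagBlockFix.

Variables (r : nat) (P : {set {set 'I_r * 'I_r}}).

Definition diag_block_fix : {set {perm 'I_r}} :=
  [set s : {perm 'I_r} |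
    [forall x : 'I_r * 'I_r, pblock P (s x.1, s x.2) == pblock P x]].

Lemma group_set_diag_block_fix : group_set diag_block_fix.
Proof.
apply/group_setP; split.
  by rewrite inE; apply/forallP => -[a b]; rewrite /= !perm1.
move=> s t; rewrite !inE => /forallP fix_s /forallP fix_t.
apply/forallP => -[a b] /=; rewrite !permM.
by move: (fix_t (s a, s b)) (fix_s (a, b)) => /= /eqP -> /eqP ->.
Qed.

Canonical diag_block_fix_group := Group group_set_diag_block_fix.

Lemma mem_diag_orbit (K : {group {perm 'I_r}}) (x : 'I_r * 'I_r) :
  x \in diag_orbit K x.
Proof.
by apply/imsetP; exists 1%g; rewrite ?group1 // !perm1 -surjective_pairing.
Qed.

Hypothesis partP : partition P [set: 'I_r * 'I_r].

Let coverP (x : 'I_r * 'I_r) : x \in cover P.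
Proof. by rewrite (cover_partition partP) inE. Qed.

Lemma refines_diag_orbitsP (K : {group {perm 'I_r}}) :
  refines (diag_orbits K) P <-> K \subset diag_block_fix.
Proof.
have trivP : trivIset P by case/and3P: partP.
split=> [refKP | sub_KS].
  apply/subsetP => s Ks; rewrite inE; apply/forallP => x.
  have [C PC orbit_sub_C] := refKP _ (imset_f (diag_orbit K) (in_setT x)).
  have sx_orbit : (s x.1, s x.2) \in diag_orbit K x by apply/imsetP; exists s.
  rewrite (def_pblock trivP PC (subsetP orbit_sub_C _ sx_orbit)).
  by rewrite (def_pblock trivP PC (subsetP orbit_sub_C _ (mem_diag_orbit K x))).
move=> _ /imsetP[x _ ->]; exists (pblock P x); first exact: pblock_mem.
apply/subsetP => _ /imsetP[s Ks ->].
move/subsetP/(_ s Ks): sub_KS; rewrite inE => /forallP/(_ x)/eqP <-.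
by rewrite mem_pblock.
Qed.

End DiagBlockFix.

Theorem lemma2p8 (r : nat) (hr : 1 <= r)
  (P : {set {set 'I_r * 'I_r}}) (hP : partition P [set: 'I_r * 'I_r]) :
  forall G H : {group {perm 'I_r}},
    refines (diag_orbits G) P -> refines (diag_orbits H) P ->
    (exists J : {group {perm 'I_r}},
       [/\ refines (diag_orbits J) P, G \subset J, H \subset J &
         forall K : {group {perm 'I_r}}, refines (diag_orbits K) P ->
           G \subset K -> H \subset K -> J \subset K]) /\
    (exists M : {group {perm 'I_r}},
       [/\ refines (diag_orbits M) P, M \subset G, M \subset H &
         forall K : {group {perm 'I_r}}, refines (diag_orbits K) P ->
           K \subset G -> K \subset H -> K \subset M]).
Proof.
have refP := @refines_diag_orbitsP _ _ hP.
move=> G H /refP sub_GS /refP sub_HS; split.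
  exists (G <*> H)%G; split.
  - by apply/refP; rewrite join_subG sub_GS sub_HS.
  - exact: joing_subl.
  - exact: joing_subr.
  - by move=> K _ sub_GK sub_HK; rewrite join_subG sub_GK sub_HK.
exists (G :&: H)%G; split.
- by apply/refP; apply: subset_trans (subsetIl G H) sub_GS.
- exact: subsetIl.
- exact: subsetIr.
- by move=> K _ sub_KG sub_KH; rewrite subsetI sub_KG sub_KH.
Qed.
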